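(* If $\Theta\vdash S$ is a minimal type for $\mathsf{F_{<:}^\top}$ and $\Theta\vdash^\top T$ is an $\mathsf{F_{<:}^\top}$ type (over an $\mathsf{F_{<:}^\top}$ context $\Theta$), then the subtyping algorithm terminates on the input $\Theta\vdash_A S<:T$.
   Context: System $\mathsf{F_{<:}^{K\top}}$: raw types $T ::= \top \mid X \mid T\to T \mid \forall^{\mathsf K}(X<:T).T \mid \forall^\top(X<:T).T$, up to $\alpha$-conversion. Contexts $\Theta$: finite sequences of $X<:T$ or $x:T$ with distinct variables, each type well-formed over the preceding part. Algorithmic subtyping $\Theta\vdash_A S<:T$ is generated by: (1) $\Theta\vdash_A T<:\top$; (2) $\Theta\vdash_A X<:X$; (3) if $T\not\equiv\top$, $T\not\equiv X$ and $\Theta,X<:S,\Theta'\vdash_A S<:T$, then $\Theta,X<:S,\Theta'\vdash_A X<:T$; (4) from $\Theta\vdash_A S'<:S$ and $\Theta\vdash_A T<:T'$ infer $\Theta\vdash_A S\to T<:S'\to T'$; (5) from $\Theta,X<:S\vdash_A T<:T'$ infer $\Theta\vdash_A\forall^{\mathsf K}(X<:S).T<:\forall^{\mathsf K}(X<:S).T'$; (6) from $\Theta\vdash_A T_0<:S_0$ and $\Theta,X<:S_0\vdash_A S_1<:T_1$ infer $\Theta\vdash_A\forall^{\mathsf K}(X<:S_0).S_1<:\forall^\top(X<:T_0).T_1$; (7) from $\Theta\vdash_A T_0<:S_0$ and $\Theta,X<:\top\vdash_A S_1<:T_1$ infer $\Theta\vdash_A\forall^\top(X<:S_0).S_1<:\forall^\top(X<:T_0).T_1$.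 Each judgement is the conclusion of at most one rule instance; the subtyping algorithm is the resulting deterministic goal-directed search: given $\Theta\vdash_A S<:T$, determine the unique applicable rule (rejecting if none), and recursively check its premises in order, accepting iff all are accepted. An $\mathsf{F_{<:}^\top}$ type/context is one containing only $\forall^\top$ quantifiers. The minimal types for $\mathsf{F_{<:}^\top}$ are the types generated by $T ::= S \mid \forall^{\mathsf K}(X<:S).T \mid S\to T$, where $S$ ranges over $\mathsf{F_{<:}^\top}$ types. *)

From Stdlib Require Import List Arith.
Import ListNotations.

(* Raw types up to alpha-conversion: de Bruijn indices for type variables.
   TVar 0 is the innermost bound / most recently declared type variable. *)
Inductive ty : Type :=
  | Top : ty
  | TVar : nat -> ty
  | Arr : ty -> ty -> ty
  | AllK : ty -> ty -> ty   (* forall^K (X <: bound). body *)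
  | AllT : ty -> ty -> ty.  (* forall^Top (X <: bound). body *)

Fixpoint tshift (d c : nat) (T : ty) : ty :=
  match T with
  | Top => Top
  | TVar n => if c <=? n then TVar (n + d) else TVar n
  | Arr A B => Arr (tshift d c A) (tshift d c B)
  | AllK A B => AllK (tshift d c A) (tshift d (S c) B)
  | AllT A B => AllT (tshift d c A) (tshift d (S c) B)
  end.

Fixpoint wf_ty (n : nat) (T : ty) : Prop :=
  match T with
  | Top => True
  | TVar m => m < n
  | Arr A B => wf_ty n A /\ wf_ty n B
  | AllK A B => wf_ty n A /\ wf_ty (S n) B
  | AllT A B => wf_ty n A /\ wf_ty (S n) B
  end.

Fixpoint ftop_ty (T : ty) : Prop :=
  match T with
  | Top => True
  | TVar _ => True
  | Arr A B => ftop_ty A /\ ftop_ty B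
  | AllK _ _ => False
  | AllT A B => ftop_ty A /\ ftop_ty B
  end.

Fixpoint minimal_ty (T : ty) : Prop :=
  ftop_ty T \/
  match T with
  | AllK S0 T1 => ftop_ty S0 /\ minimal_ty T1
  | Arr S0 T1 => ftop_ty S0 /\ minimal_ty T1
  | _ => False
  end.

(* Context entries: type-variable bindings X <: T and term bindings x : T.
   Contexts are lists with the most recent entry at the head. *)
Inductive entry : Type :=
  | EType : ty -> entry
  | ETerm : ty -> entry.

Definition ctx := list entry.

Fixpoint ntv (G : ctx) : nat :=
  match G with
  | [] => 0
  | EType _ :: G' => S (ntv G')
  | ETerm _ :: G' => ntv G'
  end.

Definition entry_ty (e : entry) : ty :=
  match e with EType T => T | ETerm T => T end.

(* each type is well formed over the preceding part of the context
   (distinctness of variables is automatic in the nameless representation) *)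
Fixpoint wf_ctx (G : ctx) : Prop :=
  match G with
  | [] => True
  | e :: G' => wf_ctx G' /\ wf_ty (ntv G') (entry_ty e)
  end.

Definition ftop_ctx (G : ctx) : Prop := Forall (fun e => ftop_ty (entry_ty e)) G.

(* bound of type variable n in G, shifted so as to live over the whole of G *)
Fixpoint get_bound (G : ctx) (n : nat) : option ty :=
  match G with
  | [] => None
  | ETerm _ :: G' => get_bound G' n
  | EType T :: G' =>
      match n with
      | 0 => Some (tshift 1 0 T)
      | S m => option_map (tshift 1 0) (get_bound G' m)
      end
  end.

Definition no_rule (S T : ty) : Prop :=
  match S, T with
  | _, Top => False
  | TVar _, _ => False
  | Arr _ _, Arr _ _ => False
  | AllK _ _, AllK _ _ => False
  | AllK _ _, AllT _ _ => False
  | AllT _ _, AllT _ _ => False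
  | _, _ => True
  end.

(* Big-step semantics of the deterministic goal-directed subtyping algorithm:
   [alg_run G S T b] means the algorithm, run on G |-_A S <: T, halts and
   returns b (true = accept, false = reject).  Premises are checked in order,
   stopping at the first rejected premise. *)
Inductive alg_run : ctx -> ty -> ty -> bool -> Prop :=
  | ar_top : forall G S, alg_run G S Top true
  | ar_refl : forall G n, alg_run G (TVar n) (TVar n) true
  | ar_var : forall G n T U b,
      T <> Top -> T <> TVar n -> get_bound G n = Some U ->
      alg_run G U T b -> alg_run G (TVar n) T b
  | ar_var_unbound : forall G n T,
      T <> Top -> T <> TVar n -> get_bound G n = None ->
      alg_run G (TVar n) T false
  | ar_arr_rej : forall G S1 S2 T1 T2,
      alg_run G T1 S1 false -> alg_run G (Arr S1 S2) (Arr T1 T2) false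
  | ar_arr : forall G S1 S2 T1 T2 b,
      alg_run G T1 S1 true -> alg_run G S2 T2 b ->
      alg_run G (Arr S1 S2) (Arr T1 T2) b
  | ar_allK : forall G S0 S1 T1 b,
      alg_run (EType S0 :: G) S1 T1 b ->
      alg_run G (AllK S0 S1) (AllK S0 T1) b
  | ar_allK_neq : forall G S0 S1 T0 T1,
      S0 <> T0 -> alg_run G (AllK S0 S1) (AllK T0 T1) false
  | ar_KT_rej : forall G S0 S1 T0 T1,
      alg_run G T0 S0 false -> alg_run G (AllK S0 S1) (AllT T0 T1) false
  | ar_KT : forall G S0 S1 T0 T1 b,
      alg_run G T0 S0 true -> alg_run (EType S0 :: G) S1 T1 b ->
      alg_run G (AllK S0 S1) (AllT T0 T1) b
  | ar_TT_rej : forall G S0 S1 T0 T1,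
      alg_run G T0 S0 false -> alg_run G (AllT S0 S1) (AllT T0 T1) false
  | ar_TT : forall G S0 S1 T0 T1 b,
      alg_run G T0 S0 true -> alg_run (EType Top :: G) S1 T1 b ->
      alg_run G (AllT S0 S1) (AllT T0 T1) b
  | ar_none : forall G S T, no_rule S T -> alg_run G S T false.

Definition alg_terminates (G : ctx) (S T : ty) : Prop :=
  exists b, alg_run G S T b.

From Stdlib Require Import List Arith Lia.
Import ListNotations.

(* Weigh a type by its size, a type variable counting one more than its
   bound.  For F_{<:}^Top goals over an F_{<:}^Top context, every rule of the
   algorithm produces premises of smaller total weight: rule (3) replaces a
   variable by its lighter bound, and rule (7) checks the bodies under X <: Top,
   which is exactly how a forall^Top quantifier is weighed.  The only rule that
   can increase the weight is (6), which moves the right-hand body from the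
   bound T0 to the bound S0.  With a minimal left-hand side it fires only along
   the spine of the minimal type: its first premise T0 <: S0 is an F_{<:}^Top
   goal, and its second is handled by induction on the spine, over a context
   extended by the F_{<:}^Top bound S0. *)

Definition scons (x : nat) (rho : nat -> nat) (n : nat) : nat :=
  match n with
  | 0 => x
  | S m => rho m
  end.

(* [rho n] is the weight of the bound of the variable [n]. *)
Fixpoint weight (rho : nat -> nat) (T : ty) : nat :=
  match T with
  | Top => 1
  | TVar n => rho n + 1
  | Arr A B => weight rho A + weight rho B + 1
  | AllK A B => weight rho A + weight (scons (weight rho A) rho) B + 1
  | AllT A B => weight rho A + weight (scons 1 rho) B + 1
  end.

(* Unbound variables get weight 0; the algorithm rejects them anyway. *)
Fixpoint bound_weights (G : ctx) : nat -> nat :=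
  match G with
  | [] => fun _ => 0
  | ETerm _ :: G' => bound_weights G'
  | EType T :: G' => scons (weight (bound_weights G') T) (bound_weights G')
  end.

Definition goal_weight (G : ctx) (S T : ty) : nat :=
  weight (bound_weights G) S + weight (bound_weights G) T.

Lemma scons_shift_above (x c : nat) (rho rho' : nat -> nat) :
  (forall n, rho' (if c <=? n then n + 1 else n) = rho n) ->
  forall n, scons x rho' (if S c <=? n then n + 1 else n) = scons x rho n.
Proof.
  intros H [|n]; simpl; [reflexivity|].
  specialize (H n). destruct (c <=? n); exact H.
Qed.

Lemma weight_tshift (T : ty) : forall (c : nat) (rho rho' : nat -> nat),
  (forall n, rho' (if c <=? n then n + 1 else n) = rho n) ->
  weight rho' (tshift 1 c T) = weight rho T.
Proof.
  induction T as [| n | A IHA B IHB | A IHA B IHB | A IHA B IHB];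
    intros c rho rho' H; simpl.
  - reflexivity.
  - specialize (H n). destruct (c <=? n); simpl; rewrite H; reflexivity.
  - rewrite (IHA c rho rho' H), (IHB c rho rho' H). reflexivity.
  - rewrite (IHA c rho rho' H), (IHB (S c) _ _ (scons_shift_above _ c rho rho' H)).
    reflexivity.
  - rewrite (IHA c rho rho' H), (IHB (S c) _ _ (scons_shift_above _ c rho rho' H)).
    reflexivity.
Qed.

Lemma weight_scons_tshift (x : nat) (rho : nat -> nat) (T : ty) :
  weight (scons x rho) (tshift 1 0 T) = weight rho T.
Proof.
  apply weight_tshift. intros n. simpl. rewrite Nat.add_1_r. reflexivity.
Qed.

Lemma bound_weights_get_bound (G : ctx) : forall (n : nat) (U : ty),
  get_bound G n = Some U -> bound_weights G n = weight (bound_weights G) U.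
Proof.
  induction G as [|[T|T] G IH]; intros n U HU; simpl in HU |- *.
  - discriminate.
  - destruct n as [|m].
    + injection HU as <-. rewrite weight_scons_tshift. reflexivity.
    + destruct (get_bound G m) as [V|] eqn:HV; simpl in HU; [|discriminate].
      injection HU as <-. rewrite weight_scons_tshift. exact (IH m V HV).
  - exact (IH n U HU).
Qed.

Lemma ftop_ty_tshift (d : nat) (T : ty) : forall c : nat,
  ftop_ty T -> ftop_ty (tshift d c T).
Proof.
  induction T as [| n | A IHA B IHB | A IHA B IHB | A IHA B IHB];
    intros c HT; simpl in HT |- *.
  - exact I.
  - destruct (c <=? n); exact I.
  - destruct HT. split; [apply IHA | apply IHB]; assumption.
  - exact HT.
  - destruct HT. split; [apply IHA | apply IHB]; assumption.
Qed.

Lemma ftop_get_bound (G : ctx) : forall (n : nat) (U : ty),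
  ftop_ctx G -> get_bound G n = Some U -> ftop_ty U.
Proof.
  induction G as [|[T|T] G IH]; intros n U HG HU; simpl in HU;
    inversion HG as [|? ? HT HG']; subst.
  - discriminate.
  - destruct n as [|m].
    + injection HU as <-. exact (ftop_ty_tshift 1 T 0 HT).
    + destruct (get_bound G m) as [V|] eqn:HV; simpl in HU; [|discriminate].
      injection HU as <-. exact (ftop_ty_tshift 1 V 0 (IH m V HG' HV)).
  - exact (IH n U HG' HU).
Qed.

Lemma alg_terminates_top (G : ctx) (S : ty) : alg_terminates G S Top.
Proof. exists true. apply ar_top. Qed.

Lemma alg_terminates_no_rule (G : ctx) (S T : ty) :
  no_rule S T -> alg_terminates G S T.
Proof. intros H. exists false. apply ar_none, H. Qed.

Lemma alg_terminates_var (G : ctx) (n : nat) (T : ty) :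
  (forall U, get_bound G n = Some U -> alg_terminates G U T) ->
  alg_terminates G (TVar n) T.
Proof.
  intros HU.
  assert (Hrule3 : T <> Top -> T <> TVar n -> alg_terminates G (TVar n) T).
  { intros HTop HVar. destruct (get_bound G n) as [U|] eqn:HB.
    - destruct (HU U eq_refl) as [b Hb]. exists b. eapply ar_var; eassumption.
    - exists false. apply ar_var_unbound; assumption. }
  destruct T as [| m | | |]; try (apply Hrule3; discriminate).
  - apply alg_terminates_top.
  - destruct (Nat.eq_dec m n) as [-> | Hmn].
    + exists true. apply ar_refl.
    + apply Hrule3; congruence.
Qed.

Lemma alg_terminates_arr (G : ctx) (S1 S2 T1 T2 : ty) :
  alg_terminates G T1 S1 -> alg_terminates G S2 T2 ->
  alg_terminates G (Arr S1 S2) (Arr T1 T2).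
Proof.
  intros [[|] H1] [b H2].
  - exists b. apply ar_arr; assumption.
  - exists false. apply ar_arr_rej; assumption.
Qed.

Lemma alg_terminates_allK_allT (G : ctx) (S0 S1 T0 T1 : ty) :
  alg_terminates G T0 S0 -> alg_terminates (EType S0 :: G) S1 T1 ->
  alg_terminates G (AllK S0 S1) (AllT T0 T1).
Proof.
  intros [[|] H0] [b H1].
  - exists b. apply ar_KT; assumption.
  - exists false. apply ar_KT_rej; assumption.
Qed.

Lemma alg_terminates_allT (G : ctx) (S0 S1 T0 T1 : ty) :
  alg_terminates G T0 S0 -> alg_terminates (EType Top :: G) S1 T1 ->
  alg_terminates G (AllT S0 S1) (AllT T0 T1).
Proof.
  intros [[|] H0] [b H1].
  - exists b. apply ar_TT; assumption.
  - exists false. apply ar_TT_rej; assumption.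
Qed.

Lemma ftop_alg_terminates (G : ctx) (S T : ty) :
  ftop_ctx G -> ftop_ty S -> ftop_ty T -> alg_terminates G S T.
Proof.
  remember (goal_weight G S T) as m eqn:Hm.
  revert G S T Hm. induction m as [m IHm] using (well_founded_induction lt_wf).
  assert (IH : forall G S T, goal_weight G S T < m ->
    ftop_ctx G -> ftop_ty S -> ftop_ty T -> alg_terminates G S T) by eauto.
  clear IHm. intros G S T -> HG HS HT.
  destruct S as [| n | S1 S2 | S0 S1 | S0 S1].
  - destruct T; try apply alg_terminates_top; apply alg_terminates_no_rule; exact I.
  - apply alg_terminates_var. intros U HU.
    apply IH; [| exact HG | exact (ftop_get_bound G n U HG HU) | exact HT].
    unfold goal_weight. simpl. rewrite (bound_weights_get_bound G n U HU). lia.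
  - destruct T as [| | T1 T2 | |]; try apply alg_terminates_top;
      try (apply alg_terminates_no_rule; exact I).
    destruct HS as [HS1 HS2], HT as [HT1 HT2].
    apply alg_terminates_arr; apply IH; try assumption; unfold goal_weight; simpl; lia.
  - contradiction.
  - destruct T as [| | | | T0 T1]; try apply alg_terminates_top;
      try (apply alg_terminates_no_rule; exact I).
    destruct HS as [HS0 HS1], HT as [HT0 HT1].
    apply alg_terminates_allT; apply IH; try assumption;
      try (unfold goal_weight; simpl; lia).
    exact (Forall_cons (EType Top) I HG).
Qed.

Lemma minimal_alg_terminates (S : ty) : forall (G : ctx) (T : ty),
  ftop_ctx G -> minimal_ty S -> ftop_ty T -> alg_terminates G S T.
Proof.
  induction S as [| n | S0 _ S1 IH1 | S0 _ S1 IH1 | S0 _ S1 _];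
    intros G T HG [HS | HS] HT; try (now apply ftop_alg_terminates); try contradiction.
  - destruct HS as [HS0 HS1].
    destruct T as [| | T1 T2 | |]; try apply alg_terminates_top;
      try (apply alg_terminates_no_rule; exact I).
    destruct HT as [HT1 HT2].
    apply alg_terminates_arr.
    + exact (ftop_alg_terminates G T1 S0 HG HT1 HS0).
    + exact (IH1 G T2 HG HS1 HT2).
  - destruct HS as [HS0 HS1].
    destruct T as [| | | | T0 T1]; try apply alg_terminates_top;
      try (apply alg_terminates_no_rule; exact I); [contradiction |].
    destruct HT as [HT0 HT1].
    apply alg_terminates_allK_allT.
    + exact (ftop_alg_terminates G T0 S0 HG HT0 HS0).
    + exact (IH1 (EType S0 :: G) T1 (Forall_cons (EType S0) HS0 HG) HS1 HT1).
Qed.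

Theorem proposition8p3 (Theta : ctx) (S T : ty) :
  wf_ctx Theta -> ftop_ctx Theta ->
  wf_ty (ntv Theta) S -> minimal_ty S ->
  wf_ty (ntv Theta) T -> ftop_ty T ->
  alg_terminates Theta S T.
Proof.
  intros _ HTheta _ HS _ HT.
  exact (minimal_alg_terminates S Theta T HTheta HS HT).
Qed.
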